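(* Under the hypotheses and notation below, write the monic eigenfunction as $p_\lambda=\sum_{\ell=1}^n c_{\lambda\lambda^{(\ell)}}m_{\lambda^{(\ell)}}$. Then $c_{\lambda\lambda^{(n)}}=c_{\lambda\lambda}=1$ and, for $1<\ell\le n$, $$c_{\lambda\lambda^{(\ell-1)}}=\frac{1}{\epsilon_\lambda-\epsilon_{\lambda^{(\ell-1)}}}\sum_{k=\ell}^n c_{\lambda\lambda^{(k)}}\,d_{\lambda^{(k)}\lambda^{(\ell-1)}}.$$
   Context: Setting: $E$ real Euclidean space spanned by an irreducible root system $R$, Weyl group $W$, positive roots $R^+$, $\mathcal{Q}^+=\mathrm{Span}_{\mathbb{N}}(R^+)$, weight lattice $\mathcal{P}$, dominant weights $\mathcal{P}^+$, partial order $\lambda\succeq\mu$ iff $\lambda-\mu\in\mathcal{Q}^+$. $\mathcal{A}^W$ is the space of $W$-invariants in the group algebra of $\mathcal{P}$ (formal exponentials $e^\lambda$, $e^\lambda e^\mu=e^{\lambda+\mu}$), with basis $m_\lambda=\sum_{\mu\in W(\lambda)}e^\mu$, $\lambda\in\mathcal{P}^+$; $\mathcal{A}^W_\lambda=\mathrm{Span}\{m_\mu\mid\mu\in\mathcal{P}^+,\mu\preceq\lambda\}$. $D:\mathcal{A}^W\to\mathcal{A}^W$ is linear with $D(\mathcal{A}^W_\lambda)\subseteq\mathcal{A}^W_\lambda$ for all $\lambda\in\mathcal{P}^+$; $\{s_\lambda\}$ is a basis with $m_\lambda=\sum_{\mu\preceq\lambda}a_{\lambda\mu}s_\mu$, $a_{\lambda\lambda}=1$,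 and $Dm_\lambda=\sum_{\mu\preceq\lambda}b_{\lambda\mu}s_\mu$, $b_{\lambda\lambda}=\epsilon_\lambda$ (sums over dominant $\mu$); $D$ is regular: $\epsilon_\mu\ne\epsilon_\lambda$ whenever $\mu\prec\lambda$ are dominant. $p_\lambda$ is the unique element of $\mathcal{A}^W$ with $Dp_\lambda=\epsilon_\lambda p_\lambda$ and $p_\lambda=m_\lambda+\sum_{\mu\in\mathcal{P}^+,\mu\prec\lambda}c_{\lambda\mu}m_\mu$. For fixed $\lambda\in\mathcal{P}^+$, $\lambda^{(1)},\dots,\lambda^{(n)}=\lambda$ is an enumeration of $\{\mu\in\mathcal{P}^+\mid\mu\preceq\lambda\}$ such that $\lambda^{(i)}\prec\lambda^{(j)}$ implies $i<j$, and $d_{\lambda^{(j)}\lambda^{(k)}}=b_{\lambda^{(j)}\lambda^{(k)}}-\epsilon_\lambda a_{\lambda^{(j)}\lambda^{(k)}}$ for $j>k$. *)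

From HB Require Import structures.
From mathcomp Require Import all_boot all_order all_algebra.
From mathcomp Require Import boolp reals.
Set Implicit Arguments. Unset Strict Implicit. Unset Printing Implicit Defensive.
Import Order.TTheory GRing.Theory Num.Theory.
Local Open Scope ring_scope.

Section RootData.
Variables (R : realType) (r : nat).
Local Notation vec := 'rV[R]_r.

Definition dotp (u v : vec) : R := (u *m v^T) 0 0.

Definition copair (x a : vec) : R := 2 * dotp x a / dotp a a.

Definition refl (a x : vec) : vec := x - copair x a *: a.

Definition is_intR (x : R) : Prop := exists z : int, x = z%:~R.

Definition irreducible_root_system (Phi : seq vec) : Prop :=
  [/\ (0 : vec) \notin Phi,
      (forall x : vec, exists c : vec -> R, x = \sum_(a <- Phi) c a *: a),
      (forall a b, a \in Phi -> b \in Phi -> refl a b \in Phi),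
      (forall a b, a \in Phi -> b \in Phi -> is_intR (copair b a)) &
      (forall S : pred vec, (exists2 a, a \in Phi & S a) ->
          (exists2 a, a \in Phi & ~~ S a) ->
          exists a b, [/\ a \in Phi, b \in Phi, S a, ~~ S b & dotp a b != 0])].

Definition regular_vec (Phi : seq vec) (v0 : vec) : Prop :=
  forall a, a \in Phi -> dotp a v0 != 0.

Definition posroot (v0 a : vec) : bool := 0 < dotp a v0.

(* Weyl group elements as words in the simple reflections s_a, a in Phi *)
Definition weyl_act (w : seq vec) (x : vec) : vec := foldr refl x w.

Definition in_orbit (Phi : seq vec) (la x : vec) : Prop :=
  exists2 w : seq vec, all (mem Phi) w & x = weyl_act w la.

Definition weight (Phi : seq vec) (x : vec) : Prop :=
  forall a, a \in Phi -> is_intR (copair x a).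

Definition dominant (Phi : seq vec) (v0 x : vec) : Prop :=
  weight Phi x /\ (forall a, a \in Phi -> posroot v0 a -> 0 <= copair x a).

Definition in_Qplus (Phi : seq vec) (v0 x : vec) : Prop :=
  exists c : vec -> nat, x = \sum_(a <- Phi | posroot v0 a) (c a)%:R *: a.

Definition preceq (Phi : seq vec) (v0 mu la : vec) : Prop :=
  in_Qplus Phi v0 (la - mu).
Definition prec (Phi : seq vec) (v0 mu la : vec) : Prop :=
  preceq Phi v0 mu la /\ mu <> la.

Variable K : fieldType.

(* Elements of the group algebra of P are finitely supported functions
   f : E -> K supported in P (f x = coefficient of e^x). *)
Definition in_groupalg (Phi : seq vec) (f : vec -> K) : Prop :=
  exists s : seq vec, forall x, f x != 0 -> x \in s /\ weight Phi x.

Definition W_invariant (Phi : seq vec) (f : vec -> K) : Prop :=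
  forall (w : seq vec) x, all (mem Phi) w -> f (weyl_act w x) = f x.

Definition in_AW (Phi : seq vec) (f : vec -> K) : Prop :=
  in_groupalg Phi f /\ W_invariant Phi f.

(* m_la = sum_{mu in W(la)} e^mu *)
Definition mono (Phi : seq vec) (la : vec) : vec -> K :=
  fun x => if `[< in_orbit Phi la x >] then 1 else 0.

Definition in_AWle (Phi : seq vec) (v0 la : vec) (f : vec -> K) : Prop :=
  exists (t : seq vec) (c : vec -> K),
    (forall mu, mu \in t -> dominant Phi v0 mu /\ preceq Phi v0 mu la) /\
    (forall x, f x = \sum_(mu <- t) c mu * mono Phi mu x).

Definition triangular_operator (Phi : seq vec) (v0 : vec)
    (D : (vec -> K) -> (vec -> K)) : Prop :=
  [/\ (forall f, in_AW Phi f -> in_AW Phi (D f)),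
      (forall f g (k : K), in_AW Phi f -> in_AW Phi g ->
         forall x, D (fun y => k * f y + g y) x = k * D f x + D g x) &
      (forall la f, dominant Phi v0 la -> in_AWle Phi v0 la f ->
         in_AWle Phi v0 la (D f))].

Definition dominant_basis (Phi : seq vec) (v0 : vec) (s : vec -> vec -> K) : Prop :=
  [/\ (forall la, dominant Phi v0 la -> in_AW Phi (s la)),
      (forall (t : seq vec) (c : vec -> K), uniq t ->
         (forall mu, mu \in t -> dominant Phi v0 mu) ->
         (forall x, \sum_(mu <- t) c mu * s mu x = 0) ->
         forall mu, mu \in t -> c mu = 0) &
      (forall f, in_AW Phi f -> exists (t : seq vec) (c : vec -> K),
         (forall mu, mu \in t -> dominant Phi v0 mu) /\
         (forall x, f x = \sum_(mu <- t) c mu * s mu x))].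

Definition lower_expansion (Phi : seq vec) (v0 : vec) (s : vec -> vec -> K)
    (la : vec) (g : vec -> K) (e : vec -> vec -> K) : Prop :=
  (exists t : seq vec, [/\ uniq t,
     (forall mu, mu \in t <-> dominant Phi v0 mu /\ preceq Phi v0 mu la) &
     (forall x, g x = \sum_(mu <- t) e la mu * s mu x)]) /\
  (forall mu, ~ (dominant Phi v0 mu /\ preceq Phi v0 mu la) -> e la mu = 0).

End RootData.

(* The eigenvalue equation [D p_la = eps_la p_la], expanded in the basis
   [s_nu] through the triangular expansions of [m_mu] and [D m_mu], yields
   [sum_k c_k d_(lam_k, nu) = 0] for every [nu <= la].  Taking
   [nu = lam_(l-1)], the terms with [k < l-1] vanish because [lam_(l-1)] is
   not below [lam_k], the diagonal term is [c_(l-1) (eps_(lam_(l-1)) - eps_la)],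
   and regularity of [D] lets one divide by this difference. *)
From HB Require Import structures.
From mathcomp Require Import all_boot all_order all_algebra.
From mathcomp Require Import boolp reals.
From mathcomp Require Import zify ring.
Import Order.TTheory GRing.Theory Num.Theory.
Local Open Scope ring_scope.

Lemma big_seq_widen (I : eqType) (V : nmodType) (t U : seq I) (F : I -> V) :
  uniq t -> uniq U -> {subset t <= U} ->
  (forall i, i \in U -> i \notin t -> F i = 0) ->
  \sum_(i <- t) F i = \sum_(i <- U) F i.
Proof.
move=> t_uniq U_uniq tU F0.
rewrite [RHS](bigID (mem t)) /= [X in _ = _ + X]big1_seq ?addr0; last first.
  by move=> i /andP[it iU]; apply: F0.
rewrite -[RHS]big_filter; apply/perm_big/uniq_perm; rewrite ?filter_uniq //.
by move=> i; rewrite mem_filter; case: (boolP (i \in t)) => // /tU ->.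
Qed.

Lemma triangular_coef_solve (K : fieldType) (n l : nat) (c d : nat -> K) (x : K) :
  (1 < l <= n)%N -> x != 0 ->
  (forall k, (1 <= k < l.-1)%N -> d k = 0) -> d l.-1 = - x ->
  \sum_(1 <= k < n.+1) c k * d k = 0 ->
  c l.-1 = x^-1 * \sum_(l <= k < n.+1) c k * d k.
Proof.
move=> l_range x_neq0 d_below d_diag.
rewrite (big_cat_nat (n := l.-1)) /=; [|lia|lia].
rewrite big_nat big1 ?add0r => [|k /d_below ->]; last by rewrite mulr0.
have [l_pos l1_lt] : (0 < l)%N /\ (l.-1 < n.+1)%N by lia.
rewrite big_ltn // d_diag prednK //.
by move/eqP; rewrite mulrN addrC subr_eq0 => /eqP ->; rewrite mulrC mulfK.
Qed.

Section Setting.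
Set Implicit Arguments.
Unset Strict Implicit.
Variables (R : realType) (r : nat) (K : fieldType).
Local Notation vec := 'rV[R]_r.
Variables (Phi : seq vec) (v0 : vec).

Lemma preceq_trans (x y z : vec) :
  preceq Phi v0 x y -> preceq Phi v0 y z -> preceq Phi v0 x z.
Proof.
move=> [cxy xy] [cyz yz]; exists (fun a => cxy a + cyz a)%N.
rewrite -(subrK y z) -addrA yz xy -big_split /=; apply: eq_bigr => a _.
by rewrite natrD scalerDl addrC.
Qed.

Lemma in_AW0 : in_AW Phi (fun _ : vec => 0 : K).
Proof. by split=> //; exists [::] => x; rewrite eqxx. Qed.

Lemma in_AW_scale_add (f g : vec -> K) (k : K) :
  in_AW Phi f -> in_AW Phi g -> in_AW Phi (fun y => k * f y + g y).
Proof.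
move=> [[sf f_supp] f_inv] [[sg g_supp] g_inv]; split; last first.
  by move=> w x w_Phi; rewrite f_inv ?g_inv.
exists (sf ++ sg) => x; rewrite mem_cat.
have [fx0|/f_supp[-> -] //] := eqVneq (f x) 0.
have [gx0|/g_supp[-> -]] := eqVneq (g x) 0; last by rewrite orbT.
by rewrite fx0 gx0 mulr0 addr0 eqxx.
Qed.

Lemma in_AW_sum (I : eqType) (t : seq I) (k : I -> K) (F : I -> vec -> K) :
  (forall i, i \in t -> in_AW Phi (F i)) ->
  in_AW Phi (fun y => \sum_(i <- t) k i * F i y).
Proof.
elim: t => [|i t IHt] F_AW.
  by under eq_fun do rewrite big_nil; exact: in_AW0.
under eq_fun do rewrite big_cons.
apply: in_AW_scale_add; first by apply: F_AW; rewrite mem_head.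
by apply: IHt => j jt; apply: F_AW; rewrite in_cons jt orbT.
Qed.

Section LinearOperator.
Variable D : (vec -> K) -> (vec -> K).
Hypothesis D_linear : forall f g (k : K), in_AW Phi f -> in_AW Phi g ->
  forall x, D (fun y => k * f y + g y) x = k * D f x + D g x.

Lemma linear_op0 x : D (fun _ => 0) x = 0.
Proof.
have := @D_linear _ _ 1 in_AW0 in_AW0 x.
under [fun _ => _]eq_fun do rewrite mulr0 addr0.
by rewrite mul1r -{1}[D _ x]addr0 => /addrI <-.
Qed.

Lemma linear_op_sum (I : eqType) (t : seq I) (k : I -> K) (F : I -> vec -> K) x :
  (forall i, i \in t -> in_AW Phi (F i)) ->
  D (fun y => \sum_(i <- t) k i * F i y) x = \sum_(i <- t) k i * D (F i) x.
Proof.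
elim: t => [|i t IHt] F_AW.
  by under eq_fun do rewrite big_nil; rewrite linear_op0 big_nil.
have F_AW' j : j \in t -> in_AW Phi (F j).
  by move=> jt; apply: F_AW; rewrite in_cons jt orbT.
under eq_fun do rewrite big_cons.
rewrite D_linear ?big_cons ?IHt //; first by apply: F_AW; rewrite mem_head.
exact: in_AW_sum.
Qed.

End LinearOperator.

Variable s : vec -> vec -> K.
Hypothesis s_in_AW : forall mu, dominant Phi v0 mu -> in_AW Phi (s mu).

Lemma lower_expansion_in_AW mu (g : vec -> K) e :
  lower_expansion Phi v0 s mu g e -> in_AW Phi g.
Proof.
move=> [[t [_ mem_t g_def]] _]; rewrite (funext g_def).
by apply: in_AW_sum => nu /mem_t[nu_dom _]; apply: s_in_AW.
Qed.

Lemma lower_expansion_widen (U : seq vec) mu (g : vec -> K) e :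
  lower_expansion Phi v0 s mu g e -> uniq U ->
  (forall nu, dominant Phi v0 nu -> preceq Phi v0 nu mu -> nu \in U) ->
  forall x, g x = \sum_(nu <- U) e mu nu * s nu x.
Proof.
move=> [[t [t_uniq mem_t g_def]] e0] U_uniq below_U x; rewrite g_def.
apply: big_seq_widen => // [nu /mem_t[]|nu _ /negP nu_t]; first exact: below_U.
by rewrite e0 ?mul0r // => /mem_t.
Qed.

Section Eigenfunction.
Variables (D : (vec -> K) -> (vec -> K)) (a b : vec -> vec -> K).
Hypothesis D_linear : forall f g (k : K), in_AW Phi f -> in_AW Phi g ->
  forall x, D (fun y => k * f y + g y) x = k * D f x + D g x.
Hypothesis s_free : forall (t : seq vec) (c : vec -> K), uniq t ->
  (forall mu, mu \in t -> dominant Phi v0 mu) ->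
  (forall x, \sum_(mu <- t) c mu * s mu x = 0) ->
  forall mu, mu \in t -> c mu = 0.
Hypothesis mono_expansion : forall mu, dominant Phi v0 mu ->
  lower_expansion Phi v0 s mu (mono K Phi mu) a.
Hypothesis D_mono_expansion : forall mu, dominant Phi v0 mu ->
  lower_expansion Phi v0 s mu (D (mono K Phi mu)) b.

Variables (la : vec) (T : seq vec).
Hypothesis T_uniq : uniq T.
Hypothesis mem_T : forall nu,
  nu \in T <-> dominant Phi v0 nu /\ preceq Phi v0 nu la.

Lemma eigenfunction_coef_eq0 (f gam : vec -> K) (E : K) :
  (forall x, f x = \sum_(mu <- T) gam mu * mono K Phi mu x) ->
  (forall x, D f x = E * f x) ->
  forall nu, nu \in T -> \sum_(mu <- T) gam mu * (b mu nu - E * a mu nu) = 0.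
Proof.
move=> f_def f_eigen; apply: s_free => // [nu /mem_T[] //|x].
have expand_T mu g e : mu \in T -> lower_expansion Phi v0 s mu g e ->
    forall x, g x = \sum_(nu <- T) e mu nu * s nu x.
  move=> /mem_T[_ mu_la] g_exp; apply: lower_expansion_widen => // nu nu_dom nu_mu.
  by apply/mem_T; split; last exact: preceq_trans nu_mu mu_la.
have T_dom mu : mu \in T -> dominant Phi v0 mu by case/mem_T.
have fx : f x = \sum_(mu <- T) gam mu * \sum_(nu <- T) a mu nu * s nu x.
  rewrite f_def; apply: eq_big_seq => mu mu_T.
  by rewrite (expand_T _ _ _ mu_T (mono_expansion (T_dom _ mu_T))).
have Dfx : D f x = \sum_(mu <- T) gam mu * \sum_(nu <- T) b mu nu * s nu x.
  rewrite (funext f_def) linear_op_sum //; last first.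
    by move=> mu /T_dom/mono_expansion/lower_expansion_in_AW.
  apply: eq_big_seq => mu mu_T.
  by rewrite (expand_T _ _ _ mu_T (D_mono_expansion (T_dom _ mu_T))).
transitivity (D f x - E * f x); last by rewrite f_eigen subrr.
under eq_bigr do rewrite mulr_suml.
rewrite exchange_big Dfx fx mulr_sumr -sumrB; apply: eq_bigr => mu _.
by rewrite !mulr_sumr -sumrB; apply: eq_bigr => nu _; ring.
Qed.

End Eigenfunction.

Section Enumeration.
Variables (la : vec) (n : nat) (lam : nat -> vec).
Hypothesis lam_inj :
  forall i j, (1 <= i <= n)%N -> (1 <= j <= n)%N -> lam i = lam j -> i = j.
Hypothesis lam_enum : forall mu, (dominant Phi v0 mu /\ preceq Phi v0 mu la) <->
  exists2 i, (1 <= i <= n)%N & mu = lam i.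
Hypothesis lam_mono : forall i j, (1 <= i <= n)%N -> (1 <= j <= n)%N ->
  prec Phi v0 (lam i) (lam j) -> (i < j)%N.

Lemma enum_uniq : uniq [seq lam i | i <- iota 1 n].
Proof.
rewrite map_inj_in_uniq ?iota_uniq // => i j; rewrite !mem_iota => i_range j_range.
by apply: lam_inj; lia.
Qed.

Lemma mem_enum nu : nu \in [seq lam i | i <- iota 1 n] <->
  dominant Phi v0 nu /\ preceq Phi v0 nu la.
Proof.
split=> [/mapP[i]|/lam_enum[i i_range ->]]; last by apply/map_f; rewrite mem_iota; lia.
by rewrite mem_iota => i_range ->; apply/lam_enum; exists i => //; lia.
Qed.

Lemma enum_not_below j k : (1 <= k < j)%N -> (j <= n)%N ->
  ~ preceq Phi v0 (lam j) (lam k).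
Proof.
move=> k_j j_n j_k; have [j_range k_range] : (1 <= j <= n)%N /\ (1 <= k <= n)%N by lia.
have [/(lam_inj j_range k_range)|/eqP j_neq_k] := eqVneq (lam j) (lam k); first lia.
by have := lam_mono j_range k_range (conj j_k j_neq_k); lia.
Qed.

End Enumeration.

End Setting.

Theorem mainTheorem2 (R : realType) (r : nat) (K : fieldType)
    (Phi : seq 'rV[R]_r) (v0 : 'rV[R]_r)
    (D : ('rV[R]_r -> K) -> ('rV[R]_r -> K))
    (s : 'rV[R]_r -> 'rV[R]_r -> K)
    (a b : 'rV[R]_r -> 'rV[R]_r -> K) (eps : 'rV[R]_r -> K)
    (la : 'rV[R]_r) (n : nat) (lam : nat -> 'rV[R]_r)
    (c : 'rV[R]_r -> 'rV[R]_r -> K) (p : 'rV[R]_r -> 'rV[R]_r -> K) :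
  irreducible_root_system Phi ->
  regular_vec Phi v0 ->
  triangular_operator Phi v0 D ->
  dominant_basis Phi v0 s ->
  (* m_mu = sum_{nu <= mu} a_{mu nu} s_nu, a_{mu mu} = 1 *)
  (forall mu, dominant Phi v0 mu ->
     lower_expansion Phi v0 s mu (mono K Phi mu) a /\ a mu mu = 1) ->
  (* D m_mu = sum_{nu <= mu} b_{mu nu} s_nu, b_{mu mu} = eps_mu *)
  (forall mu, dominant Phi v0 mu ->
     lower_expansion Phi v0 s mu (D (mono K Phi mu)) b /\ b mu mu = eps mu) ->
  (* D is regular *)
  (forall mu nu, dominant Phi v0 mu -> dominant Phi v0 nu ->
     prec Phi v0 mu nu -> eps mu != eps nu) ->
  dominant Phi v0 la ->
  (* lam 1, ..., lam n enumerates {mu in P^+ | mu <= la}, compatibly with < *)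
  (forall i j, (1 <= i <= n)%N -> (1 <= j <= n)%N -> lam i = lam j -> i = j) ->
  (forall mu, (dominant Phi v0 mu /\ preceq Phi v0 mu la) <->
     exists2 i, (1 <= i <= n)%N & mu = lam i) ->
  (forall i j, (1 <= i <= n)%N -> (1 <= j <= n)%N ->
     prec Phi v0 (lam i) (lam j) -> (i < j)%N) ->
  lam n = la ->
  (* p_la is the monic eigenfunction: D p_la = eps_la p_la and
     p_la = sum_{l=1}^n c_{la lam_l} m_{lam_l} with c_{la la} = 1 *)
  (forall x, D (p la) x = eps la * p la x) ->
  c la la = 1 ->
  (forall x, p la x = \sum_(1 <= l < n.+1) c la (lam l) * mono K Phi (lam l) x) ->
  let d := fun mu nu => b mu nu - eps la * a mu nu in
  c la (lam n) = 1 /\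
  (forall l, (1 < l <= n)%N ->
     c la (lam l.-1) =
       (eps la - eps (lam l.-1))^-1 *
         \sum_(l <= k < n.+1) c la (lam k) * d (lam k) (lam l.-1)).
Proof.
move=> _ _ [_ D_linear _] [s_in_AW s_free _] a_exp b_exp eps_regular la_dom lam_inj
  lam_enum lam_mono lam_n p_eigen c_la p_def d.
split; first by rewrite lam_n.
have sum_enum (F : 'rV[R]_r -> K) :
    \sum_(mu <- [seq lam i | i <- iota 1 n]) F mu = \sum_(1 <= k < n.+1) F (lam k).
  by rewrite big_map /index_iota subn1.
have p_enum x :
    p la x = \sum_(mu <- [seq lam i | i <- iota 1 n]) c la mu * mono K Phi mu x.
  by rewrite sum_enum.
have coef_eq0 := eigenfunction_coef_eq0 s_in_AW D_linear s_free
  (fun mu mu_dom => (a_exp mu mu_dom).1) (fun mu mu_dom => (b_exp mu mu_dom).1)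
  (enum_uniq lam_inj) (mem_enum lam_enum) p_enum p_eigen.
move=> l l_range; have [l1_range l1_le_n] : (1 <= l.-1 <= n)%N /\ (l.-1 <= n)%N by lia.
have [mu_dom mu_la] : dominant Phi v0 (lam l.-1) /\ preceq Phi v0 (lam l.-1) la.
  by apply/lam_enum; exists l.-1.
apply: (@triangular_coef_solve K n l (fun k => c la (lam k))
  (fun k => d (lam k) (lam l.-1)) _ l_range) => [|k k_range /=||].
- have n_range : (1 <= n <= n)%N by lia.
  rewrite subr_eq0 eq_sym; apply: eps_regular => //; split=> //.
  by rewrite -lam_n => mu_eq; have := lam_inj _ _ l1_range n_range mu_eq; lia.
- have [k_dom _] : dominant Phi v0 (lam k) /\ preceq Phi v0 (lam k) la.
    by apply/lam_enum; exists k => //; lia.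
  have mu_k : ~ (dominant Phi v0 (lam l.-1) /\ preceq Phi v0 (lam l.-1) (lam k)).
    by case=> _ /(enum_not_below lam_inj lam_mono k_range l1_le_n).
  by rewrite /d (a_exp _ k_dom).1.2 // (b_exp _ k_dom).1.2 // mulr0 subrr.
- by rewrite /d (a_exp _ mu_dom).2 (b_exp _ mu_dom).2 mulr1 opprB.
- by rewrite -[RHS](coef_eq0 (lam l.-1)) ?sum_enum //; apply/mem_enum.
Qed.
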